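(* The map $\pi\mapsto\mathbf w(\pi)$ is a bijection from the set of extended link patterns on $\{1,\dots,N\}$ to the set of words of length $N$ (elements of $\{0,1\}^N$).
   Context: A link pattern on a finite totally ordered set is a partition of it into pairs that are pairwise noncrossing (no $i<j<k<\ell$ with $\{i,k\}$ and $\{j,\ell\}$ both pairs). An extended link pattern $\pi$ on $\{1,\dots,N\}$ consists of integers $1\le\ell_1<\dots<\ell_a$ (left points) and $r_1<\dots<r_b\le N$ (right points), $a,b\ge 0$, with $\ell_a<r_1$ when both are present, together with a link pattern on each maximal interval of integers of $\{1,\dots,N\}$ containing none of the left or right points. The word $\mathbf w(\pi)=w_1\cdots w_N$ is defined by $w_{\ell_k}=1$ for left points, $w_{r_k}=0$ for right points, and, for each pair $\{i,j\}$ with $i<j$ of one of the link patterns, $w_i=0$ and $w_j=1$. *)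

From mathcomp Require Import all_boot.
Set Implicit Arguments. Unset Strict Implicit. Unset Printing Implicit Defensive.

(* Points {1,...,N} are represented by 'I_N = {0,...,N-1} (order-preserving shift).
   An extended link pattern is a triple (L, R, P):
   L = set of left points, R = set of right points (a strictly increasing
   sequence is the same as a finite set), P = set of oriented pairs (i, j)
   with i < j, forming the union of the link patterns on the maximal
   intervals of unmarked points. *)

Definition elp_data (N : nat) :=
  ({set 'I_N} * {set 'I_N} * {set ('I_N * 'I_N)})%type.

Definition is_elp (N : nat) (L R : {set 'I_N}) (P : {set ('I_N * 'I_N)}) : bool :=
  [&&
      [forall l in L, forall r in R, l < r],
      [forall p in P, p.1 < p.2],
      [forall p in P, (p.1 \notin L :|: R) && (p.2 \notin L :|: R)],
      [forall p in P, forall k in L :|: R, ~~ ((p.1 < k) && (k < p.2))],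
      [forall i : 'I_N, (i \notin L :|: R) ==>
          (#|[set p in P | (p.1 == i) || (p.2 == i)]| == 1)] &
      [forall p in P, forall q in P,
          ~~ [&& p.1 < q.1, q.1 < p.2 & p.2 < q.2]]].

Definition ext_link_pattern (N : nat) :=
  {x : elp_data N | is_elp x.1.1 x.1.2 x.2}.

Definition word (N : nat) (pi : ext_link_pattern N) : {ffun 'I_N -> bool} :=
  let: L := (val pi).1.1 in
  let: P := (val pi).2 in
  [ffun i => (i \in L) || [exists p in P, p.2 == i]].

(* Read a word like a bracket sequence: each 1 closes the nearest still open 0,
   a 1 with no open 0 becomes a left point and the 0s left open at the end
   become right points; this greedy scan gives a preimage of every word.
   Conversely, in a pattern with word w every point strictly inside a pair
   (i, j) is paired inside (i, j), so by induction on j - i those inner pairs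
   are determined by w; then w_i = 0 and w_j = 1 leave no way to serve i and j
   other than the pair (i, j) without a crossing or a straddled marked point.
   Finally the marked points are the unpaired ones, and w tells left from right. *)

From mathcomp Require Import all_boot zify.
Set Implicit Arguments. Unset Strict Implicit. Unset Printing Implicit Defensive.

Section ExtendedLinkPatterns.
Variable N : nat.
Implicit Types (M L R : {set 'I_N}) (P : {set 'I_N * 'I_N}) (i j k x : 'I_N).

Definition endpoint i (p : 'I_N * 'I_N) := (p.1 == i) || (p.2 == i).

Definition incident P i := [set p in P | endpoint i p].

Definition linking M P : bool :=
  [&& [forall p in P, p.1 < p.2],
      [forall p in P, (p.1 \notin M) && (p.2 \notin M)],
      [forall p in P, forall k in M, ~~ ((p.1 < k) && (k < p.2))],
      [forall i : 'I_N, (i \notin M) ==> (#|incident P i| == 1)] &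
      [forall p in P, forall q in P, ~~ [&& p.1 < q.1, q.1 < p.2 & p.2 < q.2]]].

Lemma is_elpE L R P :
  is_elp L R P = [forall l in L, forall r in R, l < r] && linking (L :|: R) P.
Proof. by []. Qed.

Definition paired_within P i j :=
  forall x, i < x < j -> exists2 q, q \in P & [&& endpoint x q, i < q.1 & q.2 < j].

Lemma incident_setU1 a P i :
  incident (a |: P) i = if endpoint i a then a |: incident P i else incident P i.
Proof.
apply/setP => p; case: ifP => ha; rewrite !inE.
  by have [->|] //= := eqVneq p a; rewrite ha.
by have [->|] //= := eqVneq p a; rewrite ha andbF.
Qed.

Lemma endpoint1 p : endpoint p.1 p.
Proof. by rewrite /endpoint eqxx. Qed.

Lemma endpoint2 p : endpoint p.2 p.
Proof. by rewrite /endpoint eqxx orbT. Qed.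

Section Linking.
Variables (M : {set 'I_N}) (P : {set 'I_N * 'I_N}).
Hypothesis linkMP : linking M P.

Lemma link_lt p : p \in P -> p.1 < p.2.
Proof. by case/and5P: linkMP => /forall_inP + _ _ _ _; apply. Qed.

Lemma link_unmarked p i : p \in P -> endpoint i p -> i \notin M.
Proof.
case/and5P: linkMP => _ /forall_inP h _ _ _ /h /andP[h1 h2].
by case/orP => /eqP <-.
Qed.

Lemma link_no_mark_inside p k : p \in P -> k \in M -> ~~ ((p.1 < k) && (k < p.2)).
Proof. by case/and5P: linkMP => _ _ /forall_inP h _ _ /h /forall_inP; apply. Qed.

Lemma link_noncrossing p q :
  p \in P -> q \in P -> ~~ [&& p.1 < q.1, q.1 < p.2 & p.2 < q.2].
Proof. by case/and5P: linkMP => _ _ _ _ /forall_inP h /h /forall_inP; apply. Qed.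

Lemma link_incident1 i : i \notin M -> #|incident P i| = 1.
Proof. by case/and5P: linkMP => _ _ _ /forallP h _ /(implyP (h i)) /eqP. Qed.

Lemma link_partner i : i \notin M -> exists2 p, p \in P & endpoint i p.
Proof.
move=> /link_incident1 /eqP /cards1P[p hp].
by have := set11 p; rewrite -hp inE => /andP[]; exists p.
Qed.

Lemma link_partner_uniq i p q :
  p \in P -> q \in P -> endpoint i p -> endpoint i q -> p = q.
Proof.
move=> hp hq hip hiq; have /eqP /cards1P[a ha] := link_incident1 (link_unmarked hp hip).
have : p \in incident P i by rewrite inE hp.
have : q \in incident P i by rewrite inE hq.
by rewrite ha !inE => /eqP -> /eqP ->.
Qed.

Lemma link_marked i : (i \in M) = (incident P i == set0).
Proof.
have [iM|iM] := boolP (i \in M); last by rewrite -cards_eq0 link_incident1.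
apply/esym/eqP/setP => p; rewrite !inE.
by apply/negbTE/andP => -[hp /(link_unmarked hp)]; rewrite iM.
Qed.

Lemma link_laminar p q : p \in P -> q \in P -> p != q ->
  [|| p.2 < q.1, q.2 < p.1, (p.1 < q.1) && (q.2 < p.2) | (q.1 < p.1) && (p.2 < q.2)].
Proof.
move=> hp hq pq.
have distinct j : endpoint j p -> ~~ endpoint j q.
  by move=> hjp; apply: contra pq => hjq; rewrite (link_partner_uniq hp hq hjp hjq).
move: (distinct p.1) (distinct p.2) (link_noncrossing hp hq) (link_noncrossing hq hp).
move: (link_lt hp) (link_lt hq); rewrite /endpoint !eqxx ?orbT -!val_eqE /=.
by move=> *; lia.
Qed.

Lemma link_paired_within i j : (i, j) \in P -> paired_within P i j.
Proof.
move=> hij x ixj; have xM : x \notin M.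
  by apply: contraL ixj => /(link_no_mark_inside hij).
have [q hq hxq] := link_partner xM; exists q => //; rewrite hxq /=.
have qij : q != (i, j).
  by apply: contraTneq hxq => ->; rewrite /endpoint -!val_eqE /=; lia.
move: (link_laminar hq hij qij) (link_lt hq) hxq ixj.
by rewrite /endpoint -!val_eqE /= => *; lia.
Qed.

End Linking.

Lemma link_add_pair M P r x : linking M P -> r \in M -> x \in M -> r < x ->
    (forall m, m \in M -> ~~ ((r < m) && (m < x))) ->
  linking (M :\ r :\ x) ((r, x) |: P).
Proof.
move=> hMP rM xM rx gap; have subM y : y \in M :\ r :\ x -> y \in M.
  by rewrite !inE => /and3P[].
apply/and5P; split.
- apply/forall_inP => p; rewrite in_setU1 => /orP[/eqP -> //|].
  move=> hp; exact: (link_lt hMP hp).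
- apply/forall_inP => p; rewrite in_setU1 => /orP[/eqP -> /=|hp].
    by rewrite !inE !eqxx /= andbF.
  apply/andP; split; apply: contra (subM _) (link_unmarked hMP hp _);
  by rewrite /endpoint eqxx ?orbT.
- apply/forall_inP => p hp; apply/forall_inP => m /subM hm.
  by case/setU1P: hp => [->|hp]; [exact: gap | exact: (link_no_mark_inside hMP hp hm)].
- apply/forallP => i; apply/implyP; rewrite incident_setU1.
  have [<-|ri] := eqVneq r i; [|have [<-|xi] := eqVneq x i].
  + have /eqP -> : incident P r == set0 by rewrite -(link_marked hMP).
    by rewrite /endpoint eqxx setU0 cards1.
  + have /eqP -> : incident P x == set0 by rewrite -(link_marked hMP).
    by rewrite /endpoint eqxx orbT setU0 cards1.
  + rewrite /endpoint /= !inE ![i == _]eq_sym (negbTE ri) (negbTE xi) /=.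
    by move=> iM; rewrite (link_incident1 hMP iM).
- apply/forall_inP => p hp; apply/forall_inP => q hq.
  case/setU1P: hp => [->|hp]; case/setU1P: hq => [->|hq] /=.
  + by rewrite ltnn.
  + by apply: contra (link_no_mark_inside hMP hq xM) => /and3P[_ -> ->]; rewrite andbT.
  + by apply: contra (link_no_mark_inside hMP hp rM) => /and3P[-> -> _].
  + exact: (link_noncrossing hMP hp hq).
Qed.

Definition word_at L P i := (i \in L) || [exists p in P, p.2 == i].

Lemma wordE (pi : ext_link_pattern N) i : word pi i = word_at (val pi).1.1 (val pi).2 i.
Proof. by rewrite ffunE. Qed.

Lemma word_at_pair2 L P p : p \in P -> word_at L P p.2.
Proof. by move=> hp; apply/orP; right; apply/existsP; exists p; rewrite hp eqxx. Qed.

Section ElpTheory.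
Variables (L R : {set 'I_N}) (P : {set 'I_N * 'I_N}).
Hypothesis elpLRP : is_elp L R P.

Lemma elp_linking : linking (L :|: R) P.
Proof. by case/andP: elpLRP. Qed.

Lemma elp_left_lt_right l r : l \in L -> r \in R -> l < r.
Proof. by case/andP: elpLRP => /forall_inP h _ /h /forall_inP; apply. Qed.

Lemma word_at_marked i : i \in L :|: R -> word_at L P i = (i \in L).
Proof.
move=> iM; rewrite /word_at; case: (i \in L) => //=.
apply/existsP => -[p /andP[hp /eqP pi]].
have : endpoint i p by rewrite /endpoint pi eqxx orbT.
by move/(link_unmarked elp_linking hp); rewrite iM.
Qed.

Lemma word_at_right r : r \in R -> word_at L P r = false.
Proof.
move=> hr; rewrite word_at_marked ?inE ?hr ?orbT //.
by apply/negbTE/negP => /elp_left_lt_right/(_ hr); rewrite ltnn.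
Qed.

Lemma word_at_pair1 p : p \in P -> word_at L P p.1 = false.
Proof.
move=> hp; have p1M : p.1 \notin L :|: R.
  by apply: (link_unmarked elp_linking hp); rewrite /endpoint eqxx.
apply/negbTE/norP; split; first by apply: contra p1M; rewrite inE => ->.
apply/existsP => -[q /andP[hq /eqP qp]].
have pq : p = q.
  by apply: (link_partner_uniq elp_linking hp hq (i := p.1)); rewrite /endpoint ?qp eqxx ?orbT.
by move: (link_lt elp_linking hp); rewrite {2}pq qp ltnn.
Qed.

Lemma elp_leftE : L = [set i | (incident P i == set0) && word_at L P i].
Proof.
apply/setP => i; rewrite inE -(link_marked elp_linking).
have [iM|iM] := boolP (i \in L :|: R); first by rewrite word_at_marked.
by apply/negbTE; apply: contra iM; rewrite inE => ->.
Qed.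

Lemma elp_rightE : R = [set i | (incident P i == set0) && ~~ word_at L P i].
Proof.
apply/setP => i; rewrite inE -(link_marked elp_linking).
have [iM|iM] := boolP (i \in L :|: R); last first.
  by apply/negbTE; apply: contra iM; rewrite inE => ->; rewrite orbT.
rewrite word_at_marked //; have [iR|iR] /= := boolP (i \in R).
  by apply/esym/negP => /elp_left_lt_right/(_ iR); rewrite ltnn.
by move: iM; rewrite inE (negbTE iR) orbF => ->.
Qed.

Lemma paired_within_opener i j : i < j -> paired_within P i j -> word_at L P i = false ->
  i \in R \/ exists2 k, (i, k) \in P & j <= k.
Proof.
move=> ij hPij /norP[iL noend]; have [iR|iR] := boolP (i \in R); [by left | right].
have iM : i \notin L :|: R by rewrite inE negb_or iL.
have [[i' k] hp /orP[/eqP /= i'i|/eqP /= ki]]:= link_partner elp_linking iM; last first.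
  by case/negP: noend; apply/existsP; exists (i', k); rewrite hp ki eqxx.
subst i'; exists k => //; rewrite leqNgt; apply/negP => kj.
have /hPij[q hq /and3P[kq iq _]] : i < k < j by rewrite kj andbT (link_lt elp_linking hp).
by move: iq; rewrite -(link_partner_uniq elp_linking hp hq (endpoint2 (i, k)) kq) ltnn.
Qed.

Lemma paired_within_closer i j : i < j -> paired_within P i j -> word_at L P j ->
  j \in L \/ exists2 m, (m, j) \in P & m <= i.
Proof.
move=> ij hPij /orP[jL|/existsP[[m j'] /andP[hp /eqP /= j'j]]]; [by left | right].
subst j'; exists m => //; rewrite leqNgt; apply/negP => im.
have /hPij[q hq /and3P[mq _ qj]] : i < m < j by rewrite im (link_lt elp_linking hp).
by move: qj; rewrite -(link_partner_uniq elp_linking hp hq (endpoint1 (m, j)) mq) ltnn.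
Qed.

Lemma elp_pair_of_paired_within i j : i < j -> paired_within P i j ->
  word_at L P i = false -> word_at L P j -> (i, j) \in P.
Proof.
move=> ij hPij /(paired_within_opener ij hPij)[iR|[k hik jk]];
  move=> /(paired_within_closer ij hPij)[jL|[m hmj mi]].
- by move: (elp_left_lt_right jL iR); rewrite ltnNge ltnW.
- have [<- //|mi'] := eqVneq m i.
  have iM : i \in L :|: R by rewrite inE iR orbT.
  by move: (link_no_mark_inside elp_linking hmj iM) mi'; rewrite -val_eqE /=; lia.
- have [<- //|kj] := eqVneq k j.
  have jM : j \in L :|: R by rewrite inE jL.
  by move: (link_no_mark_inside elp_linking hik jM) kj; rewrite -val_eqE /=; lia.
- have [<- //|mi'] := eqVneq m i; have [<- //|kj] := eqVneq k j.
  have ne : (m, j) != (i, k) by rewrite xpair_eqE negb_and mi'.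
  by move: (link_laminar elp_linking hmj hik ne) mi' kj; rewrite -!val_eqE /=; lia.
Qed.

End ElpTheory.

Lemma elp_pair_transfer L1 R1 P1 L2 R2 P2 i j :
    is_elp L1 R1 P1 -> is_elp L2 R2 P2 -> word_at L1 P1 =1 word_at L2 P2 ->
    (i, j) \in P1 ->
    (forall q : 'I_N * 'I_N, q.2 - q.1 < j - i -> (q \in P1) = (q \in P2)) ->
  (i, j) \in P2.
Proof.
move=> elp1 elp2 w12 hij shorter; have /= ij := link_lt (elp_linking elp1) hij.
apply: (elp_pair_of_paired_within elp2 ij); rewrite -?w12.
- move=> x /(link_paired_within (elp_linking elp1) hij)[[q1 q2] hq /and3P[xq iq qj]].
  by exists (q1, q2); rewrite -?shorter ?xq //=; move: iq qj => /= iq qj; lia.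
- exact (word_at_pair1 elp1 hij).
- exact (word_at_pair2 L1 hij).
Qed.

Lemma elp_pairs_eq L1 R1 P1 L2 R2 P2 :
    is_elp L1 R1 P1 -> is_elp L2 R2 P2 -> word_at L1 P1 =1 word_at L2 P2 ->
  P1 = P2.
Proof.
move=> elp1 elp2 w12.
suff IH n (q : 'I_N * 'I_N) : q.2 - q.1 < n -> (q \in P1) = (q \in P2).
  by apply/setP => q; apply: (IH (q.2 - q.1).+1).
elim: n q => [//|n IH] [i j] /= ijn; apply/idP/idP => hij.
- by apply: (elp_pair_transfer elp1 elp2 w12 hij) => q qij; apply: IH; lia.
- apply: (elp_pair_transfer elp2 elp1 (fun i => esym (w12 i)) hij) => q qij.
  by rewrite IH //; lia.
Qed.

Lemma word_inj : injective (@word N).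
Proof.
move=> [[[L1 R1] P1] /= elp1] [[[L2 R2] P2] /= elp2] /ffunP w12.
have {}w12 : word_at L1 P1 =1 word_at L2 P2 by move=> i; have := w12 i; rewrite !wordE.
have eP := elp_pairs_eq elp1 elp2 w12; subst P2.
have eL : L1 = L2.
  by rewrite (elp_leftE elp1) (elp_leftE elp2); apply/setP => i; rewrite !inE w12.
have eR : R1 = R2.
  by rewrite (elp_rightE elp1) (elp_rightE elp2); apply/setP => i; rewrite !inE w12.
by subst; apply: val_inj.
Qed.

Lemma word_at_setU1l x L P i : word_at (x |: L) P i = (x == i) || word_at L P i.
Proof. by rewrite /word_at in_setU1 eq_sym orbA. Qed.

Lemma word_at_setU1p a L P i : word_at L (a |: P) i = (a.2 == i) || word_at L P i.
Proof.
rewrite /word_at orbCA; congr (_ || _); apply/existsP/orP => [[p]|].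
  rewrite in_setU1 => /andP[/orP[/eqP -> | hp] pi]; first by left.
  by right; apply/existsP; exists p; rewrite hp.
case=> [ai|/existsP[p /andP[hp pi]]]; first by exists a; rewrite setU11.
by exists p; rewrite in_setU1 hp orbT.
Qed.

Lemma elp_min_right_to_left L R P x : is_elp L R P -> x \in R ->
  (forall r, r \in R -> x <= r) -> is_elp (x |: L) (R :\ x) P.
Proof.
rewrite !is_elpE => /andP[/forall_inP LR linkP] xR xmin.
have -> : (x |: L) :|: (R :\ x) = L :|: R.
  by apply/setP => y; rewrite !inE; case: eqP => [->|]; rewrite ?xR ?orbT.
rewrite linkP andbT; apply/forall_inP => l hl; apply/forall_inP => r.
rewrite !inE => /andP[rx hr]; case/setU1P: hl => [->|hl].
  by move: (xmin r hr) rx; rewrite -val_eqE /=; lia.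
exact: (forall_inP (LR l hl) r hr).
Qed.

Lemma elp_link_rights L R P r x : is_elp L R P -> r \in R -> x \in R -> r < x ->
    (forall y, y \in R -> ~~ ((r < y) && (y < x))) ->
  is_elp L (R :\ r :\ x) ((r, x) |: P).
Proof.
rewrite !is_elpE => /andP[/forall_inP LR linkP] rR xR rx gap.
have notL y : y \in R -> y \notin L.
  by move=> yR; apply/negP => /LR/forall_inP/(_ y yR); rewrite ltnn.
have -> : L :|: (R :\ r :\ x) = (L :|: R) :\ r :\ x.
  apply/setP => y; rewrite !inE.
  by case: eqP => [->|]; case: eqP => [->|] //=;
    rewrite ?(negbTE (notL _ rR)) ?(negbTE (notL _ xR)).
apply/andP; split.
  apply/forall_inP => l hl; apply/forall_inP => y; rewrite !inE => /and3P[_ _ yR].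
  exact: (forall_inP (LR l hl) y yR).
apply: link_add_pair; rewrite ?inE ?rR ?xR ?orbT // => m; rewrite inE => /orP[ml|/gap //].
by rewrite negb_and -leqNgt ltnW // (forall_inP (LR m ml) r rR).
Qed.

Lemma ord_ltn_eqF i j : i < j -> (i == j) = false.
Proof. by move=> ij; rewrite -val_eqE ltn_eqF. Qed.

Section Scan.
Variable w : {ffun 'I_N -> bool}.

(* The state after reading the first k letters of w: unread positions are
   provisional right points, and the pattern already reads w below k. *)
Definition scan_invariant (k : nat) L R P : Prop :=
  [/\ is_elp L R P, forall i, k <= i -> i \in R & forall i, i < k -> word_at L P i = w i].

Lemma scan_invariant0 : scan_invariant 0 set0 setT set0.
Proof.
split=> // [|i _]; last by rewrite inE.
apply/and5P; split; try by apply/forall_inP => ?; rewrite inE.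
apply/andP; split; last by apply/forall_inP => ?; rewrite inE.
by apply/forallP => i; rewrite !inE.
Qed.

Lemma scan_invariant_next x L R P L' R' P' :
    scan_invariant x L R P -> is_elp L' R' P' -> (forall i, x < i -> i \in R') ->
    word_at L' P' x = w x -> (forall i, i < x -> word_at L' P' i = word_at L P i) ->
  scan_invariant x.+1 L' R' P'.
Proof.
case=> _ _ wL elp' sufR' wx wL'; split=> // i.
by rewrite ltnS leq_eqVlt => /orP[/eqP/val_inj -> // | ix]; rewrite wL' ?wL.
Qed.

Lemma scan_step x L R P :
  scan_invariant x L R P -> exists L' R' P', scan_invariant x.+1 L' R' P'.
Proof.
move=> inv; case: (inv) => elpLRP sufR _; have xR := sufR x (leqnn x).
have [wx|wx] := boolP (w x); last first.
  exists L, R, P; apply: (scan_invariant_next inv) => // [i /ltnW/sufR //|].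
  by rewrite (word_at_right elpLRP xR) (negbTE wx).
set S := [set r in R | r < x].
have [noS|[r0 r0S]] := set_0Vmem S.
- exists (x |: L), (R :\ x), P; apply: (scan_invariant_next inv).
  + apply: elp_min_right_to_left => // r rR; rewrite leqNgt; apply/negP => rx.
    by move: (in_set0 r); rewrite -noS inE rR rx.
  + by move=> i xi; rewrite !inE eq_sym ord_ltn_eqF // sufR // ltnW.
  + by rewrite word_at_setU1l eqxx wx.
  + by move=> i ix; rewrite word_at_setU1l eq_sym (ord_ltn_eqF ix).
- have [r /[!inE] /andP[rR rx] rmax] := @arg_maxnP _ r0 (fun r => r \in S) val r0S.
  exists L, (R :\ r :\ x), ((r, x) |: P); apply: (scan_invariant_next inv).
  + apply: elp_link_rights => // y yR; apply/negP => /andP[ry yx].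
    by move: (rmax y); rewrite inE yR yx => /(_ isT) /=; rewrite leqNgt ry.
  + move=> i xi; have ri : r < i by apply: ltn_trans xi.
    by rewrite !inE eq_sym ord_ltn_eqF // eq_sym ord_ltn_eqF // sufR // ltnW.
  + by rewrite word_at_setU1p eqxx.
  + by move=> i ix; rewrite word_at_setU1p /= eq_sym (ord_ltn_eqF ix).
Qed.

Lemma scan_complete (k : nat) : k <= N -> exists L R P, scan_invariant k L R P.
Proof.
elim: k => [_|k IH kN]; first by exists set0, setT, set0; exact: scan_invariant0.
have [L [R [P inv]]] := IH (ltnW kN).
exact: (@scan_step (Ordinal kN) L R P inv).
Qed.

Lemma word_surj : exists pi, word pi = w.
Proof.
have [L [R [P [elpLRP _ wL]]]] := scan_complete (leqnn N).
by exists (exist _ (L, R, P) elpLRP); apply/ffunP => i; rewrite wordE wL.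
Qed.

End Scan.

End ExtendedLinkPatterns.

Lemma inj_surj_bij (aT : choiceType) (rT : eqType) (f : aT -> rT) :
  injective f -> (forall y, exists x, f x = y) -> bijective f.
Proof.
move=> f_inj f_surj; have surjb y : exists x, f x == y.
  by have [x <-] := f_surj y; exists x.
exists (fun y => xchoose (surjb y)) => [x|y]; last exact/eqP/(xchooseP (surjb y)).
by apply: f_inj; apply/eqP/(xchooseP (surjb (f x))).
Qed.

Theorem proposition1p6 (N : nat) : bijective (@word N).
Proof. exact: inj_surj_bij (@word_inj N) (@word_surj N). Qed.
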